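(* Let $k\geq 2$ be an integer. The generating function $\sum_{n\geq 0} h_{n,k}x^n$, where $h_{n,k}$ is the number of Hertzsprung words of length $n$ over $k$, equals \[\left(1-\frac{kx}{1+3x}-\frac{2x^{2}}{(1+3x)^{2}}\cdot\frac{U_{k}\!\left(-\frac{1+x}{2x}\right)-U_{k-1}\!\left(-\frac{1+x}{2x}\right)-1}{U_{k}\!\left(-\frac{1+x}{2x}\right)}\right)^{-1}.\]
   Context: For an integer $k\geq 2$, $[k]=\{1,\ldots,k\}$ and a word over $k$ of length $n$ is an element $w=w_1\cdots w_n\in[k]^n$ (including the empty word for $n=0$). $\mathrm{s}(w)$ is the number of indices $1\leq i\leq n-1$ with $|w_{i+1}-w_i|\leq 1$. A word $w$ is called Hertzsprung if $\mathrm{s}(w)=0$, i.e., any two consecutive letters differ by at least $2$. $U_n$ denotes the Chebyshev polynomial of the second kind: $U_0(x)=1$, $U_1(x)=2x$, $U_{n+1}(x)=2xU_n(x)-U_{n-1}(x)$. *)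

From mathcomp Require Import all_boot.
From Stdlib Require Import Reals.

Set Implicit Arguments.
Unset Strict Implicit.
Unset Printing Implicit Defensive.

(* s(w): number of indices 1 <= i <= n-1 with |w_{i+1} - w_i| <= 1
   (0-based here: i < n-1, comparing w_i and w_{i+1}). Natural-number
   distance |a - b| is (a - b) + (b - a) with truncated subtraction. *)
Definition s_stat (w : seq nat) : nat :=
  count (fun i => (nth 0 w i.+1 - nth 0 w i) + (nth 0 w i - nth 0 w i.+1) <= 1)
        (iota 0 (size w).-1).

Definition hertzsprung (w : seq nat) : bool := s_stat w == 0.

(* A word of length n over [k] is an n-tuple of letters; the letter
   i : 'I_k represents the integer i+1 in [k] = {1,...,k}. *)
Definition word_val (k n : nat) (w : n.-tuple 'I_k) : seq nat :=
  [seq (nat_of_ord i).+1 | i <- w].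

Definition h (n k : nat) : nat :=
  #|[set w : n.-tuple 'I_k | hertzsprung (word_val w)]|.

(* Chebyshev polynomials of the second kind, evaluated on reals:
   U_0 = 1, U_1 = 2x, U_{n+1} = 2x U_n - U_{n-1}. *)
Fixpoint Upair (n : nat) (x : R) : R * R :=
  match n with
  | O => (1%R, (2 * x)%R)
  | S m => let p := Upair m x in (snd p, (2 * x * snd p - fst p)%R)
  end.

Definition U (n : nat) (x : R) : R := fst (Upair n x).

(* Let g_{n,j} be the number of Hertzsprung words of length n+1 beginning
   with the letter j, G_j = sum_n g_{n,j} x^n, H = sum_n h_{n,k} x^n and
   T = (H - 1) / x.  Deleting the first letter gives the transfer relations
   G_j = 1 + x (T - G_{j-1} - G_j - G_{j+1}) for 1 <= j <= k, with
   G_0 = G_{k+1} = 0, and summing them over j gives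
   (1 + 3x) T = k H + x (G_1 + G_k).  For y = -(1+x)/(2x) the shifted sequence
   G_j - H/(1+3x) satisfies the Chebyshev recurrence F_{j+1} = 2y F_j - F_{j-1},
   so it is a combination of U_{j-1}(y) and U_{j-2}(y); the two boundary
   conditions and Cassini's identity U_{k-1}^2 - U_k U_{k-2} = 1 give
   G_1 + G_k = 2H/(1+3x) (U_k - U_{k-1} - 1)/U_k, and the summed relation then
   determines H.  For |x| < 1/(4k) every series converges, since all counts
   are at most k^n, and |y| >= 3/2 keeps U_k(y) away from 0. *)

From mathcomp Require Import all_boot zify.
From Stdlib Require Import Reals Lra.
From Coquelicot Require Import Coquelicot.

Set Implicit Arguments.
Unset Strict Implicit.
Unset Printing Implicit Defensive.

Local Open Scope nat_scope.

Definition near (a b : nat) : bool := (b - a) + (a - b) <= 1.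

Lemma s_stat_cons2 a b w : s_stat [:: a, b & w] = near a b + s_stat (b :: w).
Proof. by rewrite /s_stat /= (iotaDl 1 0) count_map. Qed.

Lemma hertzsprung_cons2 a b w :
  hertzsprung [:: a, b & w] = ~~ near a b && hertzsprung (b :: w).
Proof. by rewrite /hertzsprung s_stat_cons2; case: (near a b). Qed.

Lemma card_tuple_cons (T : finType) n (P : pred (n.+1.-tuple T)) :
  #|[set w | P w]| = \sum_(t : T) #|[set w : n.-tuple T | P (cons_tuple t w)]|.
Proof.
rewrite -sum1_card (reindex (fun p : T * n.-tuple T => cons_tuple p.1 p.2)).
  under [RHS]eq_bigr => t _ do rewrite -sum1_card.
  by rewrite pair_big_dep; apply: eq_bigl => -[t w]; rewrite !inE.
exists (fun w : n.+1.-tuple T => (thead w, behead_tuple w)) => [[t w] _ | w _] /=.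
  by rewrite theadE; congr pair; apply: val_inj.
by rewrite [RHS]tuple_eta.
Qed.

Lemma card_tuple_le (T : finType) n (A : {set n.-tuple T}) : #|A| <= expn #|T| n.
Proof. by rewrite -card_tuple max_card. Qed.

(* Hertzsprung words of length n+1 over k beginning with the letter j; the
   count is 0 for j outside [1, k], so the letters 0 and k+1 need no special case. *)
Definition hz_start (k n j : nat) : nat :=
  if 0 < j <= k then #|[set w : n.-tuple 'I_k | hertzsprung (j :: word_val w)]|
  else 0.

Lemma hz_start_out k n j : ~~ (0 < j <= k) -> hz_start k n j = 0.
Proof. by rewrite /hz_start => /negbTE ->. Qed.

Lemma hz_start0 k j : 0 < j <= k -> hz_start k 0 j = 1.
Proof.
move=> hj; rewrite /hz_start hj.
have -> : [set w : 0.-tuple 'I_k | hertzsprung (j :: word_val w)] = setT.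
  by apply/setP => -[[|]] // ?; rewrite !inE.
by rewrite cardsT card_tuple.
Qed.

Lemma hz_start_le k n j : hz_start k n j <= expn k n.
Proof.
by rewrite /hz_start; case: ifP => // _; rewrite -[k in expn k n]card_ord card_tuple_le.
Qed.

Lemma h0 k : h 0 k = 1.
Proof.
rewrite /h.
have -> : [set w : 0.-tuple 'I_k | hertzsprung (word_val w)] = setT.
  by apply/setP => -[[|]] // ?; rewrite !inE.
by rewrite cardsT card_tuple.
Qed.

Lemma h_le n k : h n k <= expn k n.
Proof. by rewrite /h -[k in expn k n]card_ord card_tuple_le. Qed.

Lemma h_sum_hz_start n k : h n.+1 k = \sum_(0 <= t < k) hz_start k n t.+1.
Proof.
rewrite /h card_tuple_cons big_mkord.
by apply: eq_bigr => t _; rewrite /hz_start ltn_ord.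
Qed.

Lemma h1 k : h 1 k = k.
Proof.
rewrite h_sum_hz_start (eq_big_nat _ _ (F2 := fun=> 1)) ?sum_nat_const_nat ?muln1 ?subn0 //.
by move=> t ht; rewrite hz_start0.
Qed.

Lemma hz_startS k n j : 0 < j <= k ->
  hz_start k n.+1 j = \sum_(0 <= t < k | ~~ near j t.+1) hz_start k n t.+1.
Proof.
move=> hj; rewrite {1}/hz_start hj card_tuple_cons big_mkord [RHS]big_mkcond.
apply: eq_bigr => t _; rewrite /hz_start ltn_ord /=.
under eq_finset => w do rewrite /word_val /= hertzsprung_cons2.
case: (near j t.+1) => //=.
by apply/eqP; rewrite cards_eq0; apply/eqP/setP => w; rewrite !inE.
Qed.

Lemma sum_near (F : nat -> nat) k j : F 0 = 0 -> F k.+1 = 0 -> 0 < j <= k ->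
  \sum_(0 <= t < k | near j t.+1) F t.+1 = F j.-1 + F j + F j.+1.
Proof.
move=> F0 Fk hj.
have -> : \sum_(0 <= t < k | near j t.+1) F t.+1 = \sum_(0 <= i < k.+2 | near j i) F i.
  rewrite big_mkcond [RHS]big_mkcond big_nat_recl // big_nat_recr //=.
  by rewrite F0 Fk !if_same add0n addn0.
have perm : perm_eq [seq i <- index_iota 0 k.+2 | near j i] [:: j.-1; j; j.+1].
  apply: uniq_perm => [|/=|i]; first exact/filter_uniq/iota_uniq.
    by rewrite !inE; lia.
  by rewrite mem_filter mem_index_iota !inE /near; lia.
by rewrite -big_filter (perm_big _ perm) !big_cons big_nil /= addn0 addnA.
Qed.

Lemma hz_start_rec k n j : 0 < j <= k ->
  hz_start k n.+1 j + hz_start k n j.-1 + hz_start k n j + hz_start k n j.+1 = h n.+1 k.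
Proof.
move=> hj; rewrite h_sum_hz_start (bigID (fun t => ~~ near j t.+1)) /= hz_startS //.
under [X in _ = _ + X]eq_bigl do rewrite negbK.
by rewrite sum_near ?addnA // hz_start_out // ltnn andbF.
Qed.

(* The sum of [hz_start_rec] over j = 1..k. *)
Lemma h_rec k n :
  h n.+2 k + 3 * h n.+1 k = k * h n.+1 k + hz_start k n 1 + hz_start k n k.
Proof.
have sum_rec : \sum_(0 <= t < k) h n.+1 k = \sum_(0 <= t < k)
    (hz_start k n.+1 t.+1 + hz_start k n t + hz_start k n t.+1 + hz_start k n t.+2).
  by apply: eq_big_nat => t ht; rewrite hz_start_rec.
have lower : \sum_(0 <= t < k) hz_start k n t + hz_start k n k = h n.+1 k.
  by rewrite h_sum_hz_start -big_nat_recr // big_nat_recl.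
have upper : \sum_(0 <= t < k) hz_start k n t.+2 + hz_start k n 1 = h n.+1 k.
  rewrite h_sum_hz_start addnC.
  rewrite -(big_nat_recl _ _ (fun t => hz_start k n t.+1)) // big_nat_recr //=.
  by rewrite [hz_start k n k.+1]hz_start_out ?addn0 // ltnn andbF.
move: sum_rec; rewrite sum_nat_const_nat subn0 !big_split /= -!h_sum_hz_start.
lia.
Qed.

Local Open Scope R_scope.

(* U_{m-1} with the convention U_{-1} = 0; note that [U (m - 1)] is U_0 at m = 0. *)
Definition U_pred (m : nat) (y : R) : R := if m is m'.+1 then U m' y else 0.

Lemma U_S m y : U m.+1 y = 2 * y * U m y - U_pred m y.
Proof. by case: m => [|m] /=; rewrite /U /=; ring. Qed.

Lemma U_cassini m y : U m y ^ 2 - U m.+1 y * U_pred m y = 1.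
Proof.
elim: m => [|m IH]; first by rewrite /U /=; ring.
rewrite [U m.+2 y]U_S /=; rewrite U_S in IH |- *.
by rewrite -[RHS]IH; ring.
Qed.

Lemma U_neq0 m y : 3 / 2 <= Rabs y -> U m y <> 0.
Proof.
move=> hy.
suff growth : forall m, 1 <= Rabs (U m y) /\ 2 * Rabs (U m y) <= Rabs (U m.+1 y).
  by case: (growth m) => U_ge1 _ U0; rewrite U0 Rabs_R0 in U_ge1; lra.
elim=> [|{}m [IH1 IH2]].
  rewrite /U /= Rabs_R1 Rabs_mult Rabs_right; lra.
split; first lra.
have := Rabs_triang_inv (2 * y * U m.+1 y) (U m y).
rewrite -[U m y]/(U_pred m.+1 y) -U_S !Rabs_mult (Rabs_right 2); last lra.
have : 3 * Rabs (U m.+1 y) <= 2 * Rabs y * Rabs (U m.+1 y).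
  by apply: Rmult_le_compat_r; [apply: Rabs_pos | lra].
rewrite [U_pred _ _]/=; lra.
Qed.

Lemma linrec_chebyshev (F : nat -> R) y k :
  (forall j, (0 < j <= k)%nat -> F j.+1 = 2 * y * F j - F j.-1) ->
  forall m, (m <= k)%nat -> F m.+1 = F 1%nat * U m y - F 0%nat * U_pred m y.
Proof.
move=> rec.
have pair m : (m < k)%nat -> F m.+1 = F 1%nat * U m y - F 0%nat * U_pred m y /\
                           F m.+2 = F 1%nat * U m.+1 y - F 0%nat * U_pred m.+1 y.
  elim: m => [|m IH] hm.
    by split; [| rewrite (rec 1%nat) //]; rewrite /U_pred /U /=; ring.
  have [Em Em1] := IH (ltnW hm); split=> //.
  by rewrite (rec m.+2) // Em1 Em /= [U m.+2 y]U_S [U m.+1 y]U_S /=; ring.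
move=> m; rewrite leq_eqVlt => /orP [/eqP -> | /pair [] //].
case: k rec pair => [|k] _ pair; first by rewrite /U /=; ring.
by case: (pair k (ltnSn k)).
Qed.

Section TransferSystem.

Variables (k : nat) (x y T : R) (G : nat -> R).
Hypotheses (k_gt0 : (0 < k)%nat) (x_neq0 : x <> 0) (h3 : 1 + 3 * x <> 0).
Hypotheses (hxy : 2 * x * y = - (1 + x)) (hU : U k y <> 0).
Hypotheses (G0 : G 0%nat = 0) (Gk : G k.+1 = 0).
Hypothesis rec : forall j, (0 < j <= k)%nat -> G j = 1 + x * (T - G j.-1 - G j - G j.+1).

Lemma transfer_ends_sum :
  G 1%nat + G k = 2 * (1 + x * T) / (1 + 3 * x) * ((U k y - U (k - 1) y - 1) / U k y).
Proof.
set H := 1 + x * T; set a := H / (1 + 3 * x).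
(* [a] is the constant solution of the inhomogeneous recurrence. *)
pose F j := G j - a.
have homog j : (0 < j <= k)%nat -> F j.+1 = 2 * y * F j - F j.-1.
  move=> hj; have Gj := rec hj; rewrite /F.
  have ha : a * (1 + 3 * x) = H by rewrite /a; field.
  apply: (Rmult_eq_reg_l x) => //.
  have := f_equal (Rmult (G j - a)) hxy.
  rewrite /H in ha; lra.
have sol := linrec_chebyshev homog.
case: k k_gt0 hU Gk sol => // m _ hUm Gm sol.
rewrite subn1 /=.
have Elast := sol m.+1 (leqnn _); have Em := sol m (leqnSn _).
rewrite /F Gm G0 /= in Elast Em.
have cas := U_cassini m y.
set u := U m.+1 y in hUm Elast cas *; set v := U m y in Elast Em cas *.
set w := U_pred m y in Em cas.
apply: (Rmult_eq_reg_r u) => //.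
have -> : 2 * H / (1 + 3 * x) * ((u - v - 1) / u) * u = 2 * a * (u - v - 1).
  by rewrite /a; field.
have := f_equal (Rmult v) Elast; have := f_equal (Rmult a) cas.
have := f_equal (Rmult u) Em.
lra.
Qed.

Lemma transfer_inverse :
  (1 + 3 * x) * T = INR k * (1 + x * T) + x * (G 1%nat + G k) ->
  (1 + x * T) * (1 - INR k * x / (1 + 3 * x)
    - 2 * x ^ 2 / (1 + 3 * x) ^ 2 * ((U k y - U (k - 1) y - 1) / U k y)) = 1.
Proof.
have := transfer_ends_sum; set ratio := (_ / U k y) => ends.
rewrite ends => sumT.
have {}sumT : x * T = INR k * x * (1 + x * T) / (1 + 3 * x)
                      + 2 * x ^ 2 * (1 + x * T) / (1 + 3 * x) ^ 2 * ratio.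
  apply: (Rmult_eq_reg_l (1 + 3 * x)) => //.
  by rewrite -[LHS]Rmult_assoc (Rmult_comm _ x) Rmult_assoc sumT; field.
lra.
Qed.

End TransferSystem.

Lemma INR_expn k n : INR (expn k n) = INR k ^ n.
Proof. by elim: n => [|n IH]; rewrite ?expn0 // expnS mult_INR IH. Qed.

Lemma ex_pseries_nat_le (a : nat -> nat) c k x :
  (forall n, a n <= c * expn k n)%nat -> INR k * Rabs x < 1 ->
  ex_pseries (fun n => INR (a n)) x.
Proof.
move=> a_le hkx; apply/ex_pseries_R.
apply: (ex_series_le _ (fun n => INR c * (INR k * Rabs x) ^ n)).
  move=> n; rewrite /norm /= /abs /= Rabs_mult (Rabs_pos_eq _ (pos_INR _)) -RPow_abs.
  rewrite Rpow_mult_distr -Rmult_assoc -INR_expn -mult_INR.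
  by apply: Rmult_le_compat_r; [apply: pow_le; apply: Rabs_pos | apply/le_INR/leP].
apply: ex_series_scal_l; apply: ex_series_geom.
by rewrite Rabs_pos_eq //; apply: Rmult_le_pos; [apply: pos_INR | apply: Rabs_pos].
Qed.

Definition gf (a : nat -> nat) (x : R) : R := PSeries (fun n => INR (a n)) x.

Section GeneratingFunctions.

Variables (k : nat) (x : R).
Hypothesis hkx : INR k * Rabs x < 1.

Let H := gf (fun n => h n k) x.
Let T := gf (fun n => h n.+1 k) x.
Let G j := gf (fun n => hz_start k n j) x.

Let ex_h : ex_pseries (fun n => INR (h n.+1 k)) x.
Proof. by apply: (ex_pseries_nat_le (c := k) _ hkx) => n; rewrite -expnS h_le. Qed.

Let ex_hz_start j : ex_pseries (fun n => INR (hz_start k n j)) x.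
Proof.
by apply: (ex_pseries_nat_le (c := 1%nat) _ hkx) => n; rewrite mul1n hz_start_le.
Qed.

Lemma gf_h : H = 1 + x * T.
Proof.
rewrite /H /gf PSeries_decr_1; last first.
  by apply: (ex_pseries_nat_le (c := 1%nat) _ hkx) => n; rewrite mul1n h_le.
by rewrite h0.
Qed.

Lemma gf_hz_start_out j : ~~ (0 < j <= k)%nat -> G j = 0.
Proof.
move=> hj; rewrite /G /gf -(PSeries_const_0 x); apply: PSeries_ext => n.
by rewrite hz_start_out.
Qed.

Lemma gf_hz_start_rec j : (0 < j <= k)%nat ->
  G j = 1 + x * (T - G j.-1 - G j - G j.+1).
Proof.
move=> hj; rewrite {1}/G /gf PSeries_decr_1 // hz_start0 //; congr (_ + x * _).
rewrite /T /G /gf -!PSeries_minus; try by repeat apply: ex_pseries_minus.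
apply: PSeries_ext => n; rewrite /PS_decr_1 /PS_minus /= -(hz_start_rec n hj) !plus_INR.
by rewrite /plus /opp /=; ring.
Qed.

Lemma gf_h_rec : (1 + 3 * x) * T = INR k * H + x * (G 1%nat + G k).
Proof.
have eT : T = INR k + x * ((INR k - 3) * T + G 1%nat + G k).
  rewrite {1}/T /gf PSeries_decr_1 // h1 /T /G /gf.
  congr (_ + x * _).
  have ex_scal : ex_pseries (PS_scal (INR k - 3) (fun n => INR (h n.+1 k))) x.
    exact: ex_pseries_scal (Rmult_comm _ _) ex_h.
  rewrite -PSeries_scal -!PSeries_plus //; last exact: ex_pseries_plus.
  apply: PSeries_ext => n.
  rewrite /PS_decr_1 /PS_plus /PS_scal /plus /scal /= /mult /=.
  have := f_equal INR (h_rec k n); rewrite !plus_INR !mult_INR [INR 0]/=; lra.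
rewrite gf_h; lra.
Qed.

End GeneratingFunctions.

Lemma chebyshev_arg_ge x :
  x <> 0 -> Rabs x <= 1 / 4 -> 3 / 2 <= Rabs (- ((1 + x) / (2 * x))).
Proof.
move=> x_neq0 x_small.
have x_pos : 0 < Rabs x by apply: Rabs_pos_lt.
have -> : Rabs (- ((1 + x) / (2 * x))) = Rabs (1 + x) / (2 * Rabs x).
  by rewrite Rabs_Ropp Rabs_div ?Rabs_mult ?(Rabs_pos_eq 2); lra.
have := Rabs_triang_inv 1 (- x); rewrite Rabs_R1 Rabs_Ropp /Rminus Ropp_involutive => tri.
apply: (Rmult_le_reg_r (2 * Rabs x)); first lra.
have -> : Rabs (1 + x) / (2 * Rabs x) * (2 * Rabs x) = Rabs (1 + x) by field; lra.
lra.
Qed.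

Theorem mainTheorem3 (k : nat) (hk : (2 <= k)%nat) :
  exists r : R, (0 < r)%R /\
  forall x : R, (0 < Rabs x < r)%R ->
    let y := (- ((1 + x) / (2 * x)))%R in
    let D := (1 - INR k * x / (1 + 3 * x)
              - (2 * x ^ 2) / ((1 + 3 * x) ^ 2)
                * ((U k y - U (k - 1) y - 1) / U k y))%R in
    (1 + 3 * x <> 0)%R /\ U k y <> 0%R /\ D <> 0%R /\
    infinite_sum (fun n => (INR (h n k) * x ^ n)%R) (/ D)%R.
Proof.
have k_gt0 : (0 < k)%nat by apply: leq_trans hk.
have k_ge2 : 2 <= INR k by apply/(le_INR 2)/leP.
exists (/ (4 * INR k)); split=> [|x [x_pos x_lt] y D].
  by apply: Rinv_0_lt_compat; lra.
have hkx : INR k * Rabs x < 1 / 4.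
  have -> : 1 / 4 = INR k * / (4 * INR k) by field; lra.
  by apply: Rmult_lt_compat_l; lra.
have x_neq0 : x <> 0 by move=> x0; rewrite x0 Rabs_R0 in x_pos; lra.
have h3 : 1 + 3 * x <> 0 by move=> e; have := Rle_abs (- x); rewrite Rabs_Ropp; nra.
have hU : U k y <> 0 by apply/U_neq0/chebyshev_arg_ge => //; nra.
have hxy : 2 * x * y = - (1 + x) by rewrite /y; field.
have hkx1 : INR k * Rabs x < 1 by lra.
have HD : gf (fun n => h n k) x * D = 1.
  rewrite gf_h //.
  apply: (transfer_inverse (G := fun j => gf (fun n => hz_start k n j) x)) => //.
  - exact: gf_hz_start_out.
  - by apply: gf_hz_start_out; rewrite ltnn andbF.
  - exact: gf_hz_start_rec.
  - by rewrite -gf_h //; apply: gf_h_rec.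
have D_neq0 : D <> 0 by move=> D0; rewrite D0 Rmult_0_r in HD; lra.
do 3!split=> //.
have -> : / D = gf (fun n => h n k) x by apply: (Rmult_eq_reg_r D) => //; rewrite Rinv_l.
apply/is_pseries_Reals/PSeries_correct/(ex_pseries_nat_le (c := 1%nat) _ hkx1) => n.
by rewrite mul1n h_le.
Qed.
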